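(* Let $T$ be a triangle which has no right angle and is not of type $(120^\circ,30^\circ,30^\circ)$. Then the 3-graph $K_4^{3-}$ with vertex set $[4]$ and edges $123,124,134$ is forbidden for $T$.
   Context: A 3-graph is a 3-uniform hypergraph; $G$ is $F$-free if it has no (not necessarily induced) subhypergraph isomorphic to $F$. A triangle is of type $(\alpha,\beta,\gamma)$ if $\alpha\ge\beta\ge\gamma$ are its interior angles in degrees. For a triangle $T$ with side lengths $a,b,c$ and $\varepsilon>0$, with $\varepsilon'=\varepsilon\min\{a,b,c\}$, a triangle $A'B'C'$ is $\varepsilon$-congruent to $T$ if there are $A,B,C\in\mathbb{R}^2$ with $ABC$ congruent to $T$ and $A',B',C'$ within distance $\varepsilon'$ of $A,B,C$ respectively. For finite $P\subseteq\mathbb{R}^2$, $\mathcal{H}(T,P,\varepsilon)$ is the 3-graph on $P$ whose edges are triples forming triangles $\varepsilon$-congruent to $T$. A 3-graph $H$ is forbidden for $T$ if there exists $\varepsilon>0$ such that for every $P\subseteq\mathbb{R}^2$ with $|P|=|V(H)|$, $\mathcal{H}(T,P,\varepsilon)$ is $H$-free. *)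

From Stdlib Require Import Reals List Permutation.
Open Scope R_scope.

Definition point : Type := (R * R)%type.

Definition dist2 (p q : point) : R :=
  sqrt ((fst p - fst q) ^ 2 + (snd p - snd q) ^ 2).

Record tri3 := Tri { sa : R; sb : R; sc : R }.

Definition is_triangle (T : tri3) : Prop :=
  0 < sa T /\ 0 < sb T /\ 0 < sc T /\
  sa T < sb T + sc T /\ sb T < sa T + sc T /\ sc T < sa T + sb T.

(* interior angles (radians), by the law of cosines: angle opposite a, b, c *)
Definition angA (T : tri3) : R :=
  acos ((sb T ^ 2 + sc T ^ 2 - sa T ^ 2) / (2 * sb T * sc T)).
Definition angB (T : tri3) : R :=
  acos ((sa T ^ 2 + sc T ^ 2 - sb T ^ 2) / (2 * sa T * sc T)).
Definition angC (T : tri3) : R :=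
  acos ((sa T ^ 2 + sb T ^ 2 - sc T ^ 2) / (2 * sa T * sb T)).

Definition deg (d : R) : R := d * PI / 180.

Definition has_right_angle (T : tri3) : Prop :=
  angA T = deg 90 \/ angB T = deg 90 \/ angC T = deg 90.

(* T is of type (alpha, beta, gamma): its angles, sorted decreasingly, are
   alpha >= beta >= gamma (given in degrees). *)
Definition of_type (T : tri3) (al be ga : R) : Prop :=
  exists x y z : R,
    Permutation (angA T :: angB T :: angC T :: nil) (x :: y :: z :: nil) /\
    x = deg al /\ y = deg be /\ z = deg ga.

(* ABC is congruent to T: the side lengths of ABC are those of T, up to
   relabelling (SSS). *)
Definition congruent (A B C : point) (T : tri3) : Prop :=
  Permutation (dist2 B C :: dist2 C A :: dist2 A B :: nil)
              (sa T :: sb T :: sc T :: nil).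

Definition eps_congruent (T : tri3) (eps : R) (A' B' C' : point) : Prop :=
  let eps' := eps * Rmin (sa T) (Rmin (sb T) (sc T)) in
  exists A B C : point, congruent A B C T /\
    dist2 A A' <= eps' /\ dist2 B B' <= eps' /\ dist2 C C' <= eps'.

(* Edge relation of the 3-graph H(T, P, eps) on the finite point set P
   (given as a duplicate-free list). *)
Definition HT_edge (T : tri3) (P : list point) (eps : R) (x y z : point) : Prop :=
  In x P /\ In y P /\ In z P /\ x <> y /\ y <> z /\ x <> z /\
  eps_congruent T eps x y z.

Definition K4minus_free (P : list point) (E : point -> point -> point -> Prop) : Prop :=
  ~ exists f : nat -> point,
      (forall i, (1 <= i <= 4)%nat -> In (f i) P) /\
      (forall i j, (1 <= i <= 4)%nat -> (1 <= j <= 4)%nat -> f i = f j -> i = j) /\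
      E (f 1%nat) (f 2%nat) (f 3%nat) /\
      E (f 1%nat) (f 2%nat) (f 4%nat) /\
      E (f 1%nat) (f 3%nat) (f 4%nat).

Definition K4minus_forbidden (T : tri3) : Prop :=
  exists eps : R, 0 < eps /\
    forall P : list point, NoDup P -> length P = 4%nat ->
      K4minus_free P (HT_edge T P eps).

(* If the triangles p1p2p3, p1p2p4 and p1p3p4 are all nearly congruent to T,
   then, once epsilon is small compared with the gaps between distinct side
   lengths of T, each shared edge p1p2, p1p3, p1p4 is matched with the same side
   of T in both triangles containing it.  Counting labels leaves two patterns
   for the six distances: opposite edges of equal lengths a, b, c, or x, x, x at
   p1 and u, u, u among p2, p3, p4, where (x, x, u) are the sides of T.
   Four points of the plane have vanishing Cayley-Menger determinant, which is
   a polynomial in the squared distances and hence Lipschitz on bounded sets.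
   At the exact lengths of the first pattern it equals
   (a^2+b^2-c^2)(a^2-b^2+c^2)(-a^2+b^2+c^2)/2, nonzero as T has no right angle;
   for the second it equals (u^2/2)^2 (3x^2-u^2), nonzero as T is not of type
   (120,30,30).  So for small epsilon neither pattern can occur. *)

From Stdlib Require Import Reals List Permutation Lra Psatz Rgeom.
From Coquelicot Require Import Rcomplements.
Open Scope R_scope.
Import ListNotations.

Lemma Permutation_cons_cancel {A} (a : A) (l1 l2 l : list A) :
  Permutation (a :: l1) l -> Permutation (a :: l2) l -> Permutation l1 l2.
Proof.
  intros H1 H2. apply Permutation_cons_inv with a.
  exact (Permutation_trans H1 (Permutation_sym H2)).
Qed.

Lemma Permutation3_cases {A} (x y z a b c : A) : Permutation [x; y; z] [a; b; c] ->
  (x = a /\ y = b /\ z = c) \/ (x = a /\ y = c /\ z = b) \/ (x = b /\ y = a /\ z = c) \/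
  (x = b /\ y = c /\ z = a) \/ (x = c /\ y = a /\ z = b) \/ (x = c /\ y = b /\ z = a).
Proof.
  intros H.
  assert (Hx : In x [a; b; c]) by (apply (Permutation_in _ H); left; reflexivity).
  destruct Hx as [<- | [<- | [<- | []]]].
  - apply (Permutation_cons_app_inv [] [b; c]) in H.
    apply Permutation_length_2 in H; tauto.
  - apply (Permutation_cons_app_inv [a] [c]) in H.
    apply Permutation_length_2 in H; tauto.
  - apply (Permutation_cons_app_inv [a; b] []) in H.
    apply Permutation_length_2 in H; tauto.
Qed.

(* Labels of the three triangles p1p2p3, p1p2p4, p1p3p4 listed as
   (12, 13, 23), (12, 14, 24), (13, 14, 34): opposite edges get equal labels,
   or the edges at p1 share one label and the others another. *)
Lemma K4minus_labels {A} (p q r s t u : A) (l : list A) :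
  Permutation [p; q; r] l -> Permutation [p; s; t] l -> Permutation [q; s; u] l ->
  (r = s /\ t = q /\ u = p) \/ (q = p /\ s = p /\ t = r /\ u = r).
Proof.
  intros H1 H2 H3.
  assert (E1 := Permutation_length_2 (Permutation_cons_cancel _ _ _ _ H1 H2)).
  assert (H1' : Permutation [q; p; r] l) by (eapply Permutation_trans; [apply perm_swap | exact H1]).
  assert (E2 := Permutation_length_2 (Permutation_cons_cancel _ _ _ _ H1' H3)).
  assert (H2' : Permutation [s; p; t] l) by (eapply Permutation_trans; [apply perm_swap | exact H2]).
  assert (H3' : Permutation [s; q; u] l) by (eapply Permutation_trans; [apply perm_swap | exact H3]).
  assert (E3 := Permutation_length_2 (Permutation_cons_cancel _ _ _ _ H2' H3')).
  destruct E1 as [[] | []], E2 as [[] | []], E3 as [[] | []]; subst; tauto.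
Qed.

Lemma exists_pos_below_nonzero (B : R) (l : list R) : 0 < B ->
  exists d, 0 < d <= B /\ forall v, In v l -> v <> 0 -> d < Rabs v.
Proof.
  intros HB. induction l as [| v l [d [Hd Hl]]].
  - exists B. split; [lra | intros v []].
  - destruct (Req_dec v 0) as [Hv | Hv].
    + exists d. split; [exact Hd |]. intros w [<- | Hw] Hw0; [contradiction | auto].
    + pose proof (Rabs_pos_lt v Hv).
      exists (Rmin d (Rabs v / 2)). split.
      * split; [apply Rmin_pos; lra | pose proof (Rmin_l d (Rabs v / 2)); lra].
      * intros w [<- | Hw] Hw0.
        -- pose proof (Rmin_r d (Rabs v / 2)); lra.
        -- pose proof (Rmin_l d (Rabs v / 2)); specialize (Hl w Hw Hw0); lra.
Qed.

Lemma dist2_euc (p q : point) : dist2 p q = dist_euc (fst p) (snd p) (fst q) (snd q).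
Proof. unfold dist2, dist_euc. rewrite !Rsqr_pow2. reflexivity. Qed.

Lemma dist2_sym (p q : point) : dist2 p q = dist2 q p.
Proof. rewrite !dist2_euc. apply distance_symm. Qed.

Lemma dist2_triangle (p q r : point) : dist2 p r <= dist2 p q + dist2 q r.
Proof. rewrite !dist2_euc. apply triangle. Qed.

Lemma dist2_sqr (p q : point) : dist2 p q ^ 2 = (fst p - fst q) ^ 2 + (snd p - snd q) ^ 2.
Proof.
  unfold dist2. apply pow2_sqrt.
  pose proof (pow2_ge_0 (fst p - fst q)); pose proof (pow2_ge_0 (snd p - snd q)); lra.
Qed.

Lemma Rabs_dist2_sub (p q p' q' : point) :
  Rabs (dist2 p q - dist2 p' q') <= dist2 p' p + dist2 q' q.
Proof.
  apply Rabs_le_between'.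
  pose proof (dist2_triangle p' p q); pose proof (dist2_triangle p' q q');
  pose proof (dist2_triangle p p' q'); pose proof (dist2_triangle p q' q).
  rewrite (dist2_sym p p'), (dist2_sym q q') in *. lra.
Qed.

Definition sym_det3 (p q r x y z : R) : R :=
  p * q * r + 2 * x * y * z - p * z * z - q * y * y - r * x * x.

(* The Gram determinant of p2 - p1, p3 - p1, p4 - p1 written in terms of the
   squared distances Dij (a multiple of the Cayley-Menger determinant). *)
Definition cayley_menger (D12 D13 D14 D23 D24 D34 : R) : R :=
  sym_det3 D12 D13 D14
    ((D12 + D13 - D23) / 2) ((D12 + D14 - D24) / 2) ((D13 + D14 - D34) / 2).

Lemma cayley_menger_planar (p1 p2 p3 p4 : point) :
  cayley_menger (dist2 p1 p2 ^ 2) (dist2 p1 p3 ^ 2) (dist2 p1 p4 ^ 2)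
    (dist2 p2 p3 ^ 2) (dist2 p2 p4 ^ 2) (dist2 p3 p4 ^ 2) = 0.
Proof. rewrite !dist2_sqr. unfold cayley_menger, sym_det3. field. Qed.

Definition pythag_product (a b c : R) : R :=
  (a ^ 2 + b ^ 2 - c ^ 2) * (a ^ 2 - b ^ 2 + c ^ 2) * (- a ^ 2 + b ^ 2 + c ^ 2).

Lemma cayley_menger_isosceles (a b c : R) :
  cayley_menger (a ^ 2) (b ^ 2) (c ^ 2) (c ^ 2) (b ^ 2) (a ^ 2) = pythag_product a b c / 2.
Proof. unfold cayley_menger, sym_det3, pythag_product. field. Qed.

Definition star_poly (x u : R) : R := (u ^ 2 / 2) ^ 2 * (3 * x ^ 2 - u ^ 2).

Lemma cayley_menger_star (x u : R) :
  cayley_menger (x ^ 2) (x ^ 2) (x ^ 2) (u ^ 2) (u ^ 2) (u ^ 2) = star_poly x u.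
Proof. unfold cayley_menger, sym_det3, star_poly. field. Qed.

Ltac destruct_Forall :=
  repeat match goal with H : Forall _ (_ :: _) |- _ => inversion_clear H end.

Ltac split_Forall := repeat apply Forall_cons; try apply Forall_nil.

Lemma Rabs_mult3_le (a b c A B C : R) :
  Rabs a <= A -> Rabs b <= B -> Rabs c <= C -> Rabs (a * b * c) <= A * B * C.
Proof.
  intros Ha Hb Hc. rewrite !Rabs_mult.
  pose proof (Rabs_pos a); pose proof (Rabs_pos b); pose proof (Rabs_pos c).
  apply Rmult_le_compat; [nra | lra | apply Rmult_le_compat | ]; lra.
Qed.

Lemma Rabs_mult3_sub_le (L h x1 x2 x3 y1 y2 y3 : R) :
  Rabs x2 <= L -> Rabs x3 <= L -> Rabs y1 <= L -> Rabs y2 <= L ->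
  Rabs (x1 - y1) <= h -> Rabs (x2 - y2) <= h -> Rabs (x3 - y3) <= h ->
  Rabs (x1 * x2 * x3 - y1 * y2 * y3) <= 3 * (L * L * h).
Proof.
  intros Hx2 Hx3 Hy1 Hy2 H1 H2 H3.
  replace (x1 * x2 * x3 - y1 * y2 * y3)
    with ((x1 - y1) * x2 * x3 + (y1 * (x2 - y2) * x3 + y1 * y2 * (x3 - y3))) by ring.
  eapply Rle_trans; [apply Rabs_triang |].
  eapply Rle_trans; [apply Rplus_le_compat_l, Rabs_triang |].
  assert (Rabs ((x1 - y1) * x2 * x3) <= h * L * L) by (apply Rabs_mult3_le; auto).
  assert (Rabs (y1 * (x2 - y2) * x3) <= L * h * L) by (apply Rabs_mult3_le; auto).
  assert (Rabs (y1 * y2 * (x3 - y3)) <= L * L * h) by (apply Rabs_mult3_le; auto).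
  lra.
Qed.

Lemma sym_det3_lipschitz (L h p q r x y z p' q' r' x' y' z' : R) :
  Forall (fun v => Rabs v <= L) [p; q; r; x; y; z; p'; q'; r'; x'; y'; z'] ->
  Forall (fun v => Rabs v <= h) [p - p'; q - q'; r - r'; x - x'; y - y'; z - z'] ->
  Rabs (sym_det3 p q r x y z - sym_det3 p' q' r' x' y' z') <= 18 * (L * L * h).
Proof.
  intros HL Hh.
  destruct_Forall.
  assert (Hpqr : Rabs (p * q * r - p' * q' * r') <= 3 * (L * L * h))
    by (apply Rabs_mult3_sub_le; assumption).
  assert (Hxyz : Rabs (x * y * z - x' * y' * z') <= 3 * (L * L * h))
    by (apply Rabs_mult3_sub_le; assumption).
  assert (Hpzz : Rabs (p * z * z - p' * z' * z') <= 3 * (L * L * h))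
    by (apply Rabs_mult3_sub_le; assumption).
  assert (Hqyy : Rabs (q * y * y - q' * y' * y') <= 3 * (L * L * h))
    by (apply Rabs_mult3_sub_le; assumption).
  assert (Hrxx : Rabs (r * x * x - r' * x' * x') <= 3 * (L * L * h))
    by (apply Rabs_mult3_sub_le; assumption).
  apply Rabs_le_between in Hpqr, Hxyz, Hpzz, Hqyy, Hrxx.
  apply Rabs_le_between.
  unfold sym_det3. lra.
Qed.

Lemma cayley_menger_lipschitz (M2 eta D12 D13 D14 D23 D24 D34 S12 S13 S14 S23 S24 S34 : R) :
  eta <= 1 ->
  Forall (fun s => 0 <= s <= M2) [S12; S13; S14; S23; S24; S34] ->
  Forall (fun v => Rabs v <= eta)
    [D12 - S12; D13 - S13; D14 - S14; D23 - S23; D24 - S24; D34 - S34] ->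
  Rabs (cayley_menger D12 D13 D14 D23 D24 D34 - cayley_menger S12 S13 S14 S23 S24 S34)
    <= 36 * ((2 * M2 + 2) * (2 * M2 + 2) * eta).
Proof.
  intros Heta HS HD.
  destruct_Forall.
  repeat match goal with H : Rabs _ <= eta |- _ => apply Rabs_le_between in H end.
  replace (36 * ((2 * M2 + 2) * (2 * M2 + 2) * eta))
    with (18 * ((2 * M2 + 2) * (2 * M2 + 2) * (2 * eta))) by ring.
  apply sym_det3_lipschitz; split_Forall; apply Rabs_le_between; lra.
Qed.

Lemma Rabs_sqr_sub_le (d s M h : R) :
  0 <= d -> 0 <= s <= M -> h <= 1 -> Rabs (d - s) <= h -> Rabs (d ^ 2 - s ^ 2) <= h * (2 * M + 1).
Proof.
  intros Hd Hs Hh1 Hds. apply Rabs_le_between in Hds.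
  replace (d ^ 2 - s ^ 2) with ((d - s) * (d + s)) by ring.
  rewrite Rabs_mult, (Rabs_right (d + s)) by lra.
  apply Rmult_le_compat; [apply Rabs_pos | lra | apply Rabs_le_between | ]; lra.
Qed.

Definition near_lengths (h : R) (p1 p2 p3 p4 : point) (s12 s13 s14 s23 s24 s34 : R) : Prop :=
  Forall (fun v => Rabs v <= h)
    [dist2 p1 p2 - s12; dist2 p1 p3 - s13; dist2 p1 p4 - s14;
     dist2 p2 p3 - s23; dist2 p2 p4 - s24; dist2 p3 p4 - s34].

Definition cm_bound (M : R) : R := 36 * ((2 * M ^ 2 + 2) * (2 * M ^ 2 + 2) * (2 * M + 1)).

Lemma cm_bound_nonneg (M : R) : 0 <= M -> 0 <= cm_bound M.
Proof. intros HM. unfold cm_bound. pose proof (pow2_ge_0 M). apply Rmult_le_pos; nra. Qed.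

Lemma cayley_menger_near (M h : R) (p1 p2 p3 p4 : point) (s12 s13 s14 s23 s24 s34 : R) :
  0 <= h -> h * (2 * M + 1) <= 1 ->
  Forall (fun s => 0 <= s <= M) [s12; s13; s14; s23; s24; s34] ->
  near_lengths h p1 p2 p3 p4 s12 s13 s14 s23 s24 s34 ->
  Rabs (cayley_menger (s12 ^ 2) (s13 ^ 2) (s14 ^ 2) (s23 ^ 2) (s24 ^ 2) (s34 ^ 2))
    <= cm_bound M * h.
Proof.
  intros Hh HhM HS Hn.
  assert (HM : 0 <= M) by (inversion HS; lra).
  (* compare with the actual squared distances, where the determinant vanishes *)
  rewrite <- Rabs_Ropp, <- Rminus_0_l, <- (cayley_menger_planar p1 p2 p3 p4).
  replace (cm_bound M * h) with (36 * ((2 * M ^ 2 + 2) * (2 * M ^ 2 + 2) * (h * (2 * M + 1))))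
    by (unfold cm_bound; ring).
  unfold near_lengths in Hn. destruct_Forall.
  apply cayley_menger_lipschitz; [exact HhM | |]; split_Forall.
  all: first [split; [apply pow2_ge_0 | apply pow_incr; lra]
             | apply Rabs_sqr_sub_le; [apply sqrt_pos | assumption | nra | assumption]].
Qed.

Lemma pythag_product_perm (a b c a' b' c' : R) :
  Permutation [a; b; c] [a'; b'; c'] -> pythag_product a b c = pythag_product a' b' c'.
Proof.
  intros H. unfold pythag_product.
  destruct (Permutation3_cases _ _ _ _ _ _ H) as
    [(-> & -> & ->) | [(-> & -> & ->) | [(-> & -> & ->) |
     [(-> & -> & ->) | [(-> & -> & ->) | (-> & -> & ->)]]]]]; ring.
Qed.

Definition angle_opp (p q r : R) : R := acos ((q ^ 2 + r ^ 2 - p ^ 2) / (2 * q * r)).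

Lemma angle_opp_comm (p q r : R) : angle_opp p q r = angle_opp p r q.
Proof. unfold angle_opp. f_equal. f_equal; ring. Qed.

Lemma angle_opp_right (p q r : R) : q ^ 2 + r ^ 2 - p ^ 2 = 0 -> angle_opp p q r = deg 90.
Proof. intros H. unfold angle_opp, deg. rewrite H, Rdiv_0_l, acos_0. field. Qed.

Lemma angle_opp_apex (x u : R) : 0 < x -> u ^ 2 = 3 * x ^ 2 -> angle_opp u x x = deg 120.
Proof.
  intros Hx Hu. unfold angle_opp, deg.
  replace ((x ^ 2 + x ^ 2 - u ^ 2) / (2 * x * x)) with (cos (2 * (PI / 3)))
    by (rewrite cos_2PI3, Hu; field; lra).
  pose proof PI_RGT_0. rewrite acos_cos by lra. field.
Qed.

Lemma angle_opp_base (x u : R) : 0 < x -> 0 < u -> u ^ 2 = 3 * x ^ 2 -> angle_opp x u x = deg 30.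
Proof.
  intros Hx Hu0 Hu. unfold angle_opp, deg.
  assert (Hsqrt : u = sqrt 3 * x).
  { rewrite <- (sqrt_pow2 u), Hu, sqrt_mult, sqrt_pow2 by (try apply pow2_ge_0; lra).
    reflexivity. }
  replace ((u ^ 2 + x ^ 2 - x ^ 2) / (2 * u * x)) with (cos (PI / 6))
    by (rewrite cos_PI6, Hsqrt; field; split; [lra | apply Rgt_not_eq, sqrt_lt_R0; lra]).
  pose proof PI_RGT_0. rewrite acos_cos by lra. field.
Qed.

Lemma has_right_angle_of_pythag (T : tri3) :
  pythag_product (sa T) (sb T) (sc T) = 0 -> has_right_angle T.
Proof.
  intros H. unfold pythag_product in H.
  destruct (Rmult_integral _ _ H) as [H' | HA]; [destruct (Rmult_integral _ _ H') as [HC | HB] |].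
  - right; right. apply angle_opp_right. lra.
  - right; left. apply angle_opp_right. lra.
  - left. apply angle_opp_right. lra.
Qed.

Lemma of_type_120_30_30_of_sides (T : tri3) (x u : R) :
  0 < x -> 0 < u -> Permutation [x; x; u] [sa T; sb T; sc T] -> u ^ 2 = 3 * x ^ 2 ->
  of_type T 120 30 30.
Proof.
  intros Hx Hu0 Hp Hu.
  exists (deg 120), (deg 30), (deg 30). split; [| repeat split].
  change (Permutation [angle_opp (sa T) (sb T) (sc T); angle_opp (sb T) (sa T) (sc T);
                       angle_opp (sc T) (sa T) (sb T)] [deg 120; deg 30; deg 30]).
  assert (Hbase' : angle_opp x x u = deg 30) by (rewrite angle_opp_comm; apply angle_opp_base; auto).
  destruct (Permutation3_cases _ _ _ _ _ _ Hp) as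
    [(E1 & E2 & E3) | [(E1 & E2 & E3) | [(E1 & E2 & E3) |
     [(E1 & E2 & E3) | [(E1 & E2 & E3) | (E1 & E2 & E3)]]]]];
    rewrite <- E1, <- E2, <- E3, ?angle_opp_apex, ?angle_opp_base, ?Hbase' by auto.
  all: first [reflexivity | apply perm_swap
             | exact (perm_trans (perm_skip _ (perm_swap _ _ _)) (perm_swap _ _ _))].
Qed.

Section NearCongruence.

Variable T : tri3.
Hypothesis HT : is_triangle T.

Definition sides : list R := [sa T; sb T; sc T].
Definition perimeter : R := sa T + sb T + sc T.
Definition min_side : R := Rmin (sa T) (Rmin (sb T) (sc T)).

Lemma in_sides_bounds (s : R) : In s sides -> 0 < s <= perimeter.
Proof.
  destruct HT as (Ha & Hb & Hc & _). unfold perimeter.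
  intros [<- | [<- | [<- | []]]]; lra.
Qed.

Lemma perimeter_pos : 0 < perimeter.
Proof. destruct HT as (Ha & Hb & Hc & _). unfold perimeter. lra. Qed.

Lemma min_side_pos : 0 < min_side.
Proof. destruct HT as (Ha & Hb & Hc & _). repeat apply Rmin_pos; assumption. Qed.

Definition near_sides (h : R) (x y z : point) : Prop :=
  exists sxy sxz syz, Permutation [sxy; sxz; syz] sides /\
    Rabs (dist2 x y - sxy) <= h /\ Rabs (dist2 x z - sxz) <= h /\ Rabs (dist2 y z - syz) <= h.

Lemma eps_congruent_near_sides (h : R) (x y z : point) :
  eps_congruent T (h / (2 * min_side)) x y z -> near_sides h x y z.
Proof.
  intros (A & B & C & Hcong & HA & HB & HC).
  fold min_side in HA, HB, HC.
  replace (h / (2 * min_side) * min_side) with (h / 2) in HA, HB, HC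
    by (pose proof min_side_pos; field; lra).
  exists (dist2 A B), (dist2 A C), (dist2 B C). split.
  - unfold congruent in Hcong. rewrite (dist2_sym C A) in Hcong.
    exact (Permutation_trans (Permutation_rev [dist2 A B; dist2 A C; dist2 B C]) Hcong).
  - repeat split; (eapply Rle_trans; [apply Rabs_dist2_sub | lra]).
Qed.

(* The quantities that must stay away from 0: differences of side lengths
   and the Cayley-Menger values of the two exact configurations of the
   lemma [near_K4minus_cases]. *)
Definition obstructions : list R :=
  pythag_product (sa T) (sb T) (sc T) / 2
  :: map (fun st => fst st - snd st) (list_prod sides sides)
  ++ map (fun xu => star_poly (fst xu) (snd xu)) (list_prod sides sides).

Definition admissible (h : R) : Prop :=
  0 < h /\ h * (2 * perimeter + 1) <= 1 /\
  forall v, In v obstructions -> v <> 0 -> (2 + cm_bound perimeter) * h < Rabs v.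

Lemma admissible_exists : exists h, admissible h.
Proof.
  pose proof perimeter_pos as HP.
  pose proof (cm_bound_nonneg perimeter ltac:(lra)) as HC.
  destruct (exists_pos_below_nonzero (1 / (2 * perimeter + 1)) obstructions)
    as (d & [Hd HdB] & Hl).
  { apply Rdiv_lt_0_compat; lra. }
  exists (d / (2 + cm_bound perimeter)). split; [| split].
  - apply Rdiv_lt_0_compat; lra.
  - apply Rmult_le_compat_r with (r := 2 * perimeter + 1) in HdB; [| lra].
    replace (1 / (2 * perimeter + 1) * (2 * perimeter + 1)) with 1 in HdB by (field; lra).
    assert (d / (2 + cm_bound perimeter) <= d).
    { apply Rmult_le_reg_r with (2 + cm_bound perimeter); [lra |].
      field_simplify; nra. }
    nra.
  - intros v Hv Hv0. replace ((2 + cm_bound perimeter) * (d / (2 + cm_bound perimeter)))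
      with d by (field; lra).
    auto.
Qed.

Lemma admissible_obstruction (h v : R) :
  admissible h -> In v obstructions -> Rabs v <= (2 + cm_bound perimeter) * h -> v = 0.
Proof.
  intros (_ & _ & Hobs) Hv Hle.
  destruct (Req_dec v 0) as [| Hv0]; [assumption |].
  specialize (Hobs v Hv Hv0). lra.
Qed.

Lemma near_same_side (h d s s' : R) : admissible h -> In s sides -> In s' sides ->
  Rabs (d - s) <= h -> Rabs (d - s') <= h -> s = s'.
Proof.
  intros Hh Hs Hs' Hds Hds'.
  pose proof (cm_bound_nonneg perimeter ltac:(pose proof perimeter_pos; lra)).
  pose proof Hh as (Hh0 & _).
  apply Rminus_diag_uniq, (admissible_obstruction h); [assumption | |].
  - right. apply in_app_iff. left.
    exact (in_map (fun st => fst st - snd st) _ (s, s') (in_prod _ _ _ _ Hs Hs')).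
  - apply Rabs_le_between in Hds, Hds'. apply Rabs_le_between. nra.
Qed.

Lemma near_K4minus_cases (h : R) (p1 p2 p3 p4 : point) :
  admissible h -> near_sides h p1 p2 p3 -> near_sides h p1 p2 p4 -> near_sides h p1 p3 p4 ->
  (exists a b c, Permutation [a; b; c] sides /\ near_lengths h p1 p2 p3 p4 a b c c b a) \/
  (exists x u, Permutation [x; x; u] sides /\ near_lengths h p1 p2 p3 p4 x x x u u u).
Proof.
  intros Hh (a12 & a13 & a23 & Ha & A12 & A13 & A23) (b12 & b14 & b24 & Hb & B12 & B14 & B24)
    (c13 & c14 & c34 & Hc & C13 & C14 & C34).
  assert (Hin : forall s l, Permutation l sides -> In s l -> In s sides)
    by (intros s l Hl; apply Permutation_in, Hl).
  assert (b12 = a12) by (apply (near_same_side h (dist2 p1 p2));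
    [exact Hh | apply (Hin _ _ Hb) | apply (Hin _ _ Ha) | exact B12 | exact A12]; simpl; tauto).
  assert (c13 = a13) by (apply (near_same_side h (dist2 p1 p3));
    [exact Hh | apply (Hin _ _ Hc) | apply (Hin _ _ Ha) | exact C13 | exact A13]; simpl; tauto).
  assert (c14 = b14) by (apply (near_same_side h (dist2 p1 p4));
    [exact Hh | apply (Hin _ _ Hc) | apply (Hin _ _ Hb) | exact C14 | exact B14]; simpl; tauto).
  subst b12 c13 c14.
  destruct (K4minus_labels _ _ _ _ _ _ _ Ha Hb Hc) as [(-> & -> & ->) | (-> & -> & -> & ->)].
  - left. exists a12, a13, b14. split; [exact Ha |]. split_Forall; assumption.
  - right. exists a12, a23. split; [exact Ha |]. split_Forall; assumption.
Qed.

Lemma cayley_menger_near_sides (h : R) (p1 p2 p3 p4 : point) (s12 s13 s14 s23 s24 s34 : R) :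
  admissible h -> incl [s12; s13; s14; s23; s24; s34] sides ->
  near_lengths h p1 p2 p3 p4 s12 s13 s14 s23 s24 s34 ->
  Rabs (cayley_menger (s12 ^ 2) (s13 ^ 2) (s14 ^ 2) (s23 ^ 2) (s24 ^ 2) (s34 ^ 2))
    <= (2 + cm_bound perimeter) * h.
Proof.
  intros (Hh0 & Hh1 & _) Hincl Hn.
  eapply Rle_trans; [apply (cayley_menger_near perimeter h p1 p2 p3 p4); auto; [lra |] | lra].
  apply Forall_forall. intros s Hs. pose proof (in_sides_bounds s (Hincl s Hs)). lra.
Qed.

Lemma isosceles_pattern_right_angle (h : R) (p1 p2 p3 p4 : point) (a b c : R) :
  admissible h -> Permutation [a; b; c] sides -> near_lengths h p1 p2 p3 p4 a b c c b a ->
  has_right_angle T.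
Proof.
  intros Hh Hp Hn. apply has_right_angle_of_pythag.
  enough (pythag_product (sa T) (sb T) (sc T) / 2 = 0) by lra.
  apply (admissible_obstruction h); [exact Hh | left; reflexivity |].
  rewrite <- (pythag_product_perm _ _ _ _ _ _ Hp), <- cayley_menger_isosceles.
  apply (cayley_menger_near_sides h p1 p2 p3 p4); [exact Hh | | exact Hn].
  intros s Hs. apply (Permutation_in _ Hp). simpl in *; tauto.
Qed.

Lemma star_pattern_of_type (h : R) (p1 p2 p3 p4 : point) (x u : R) :
  admissible h -> Permutation [x; x; u] sides -> near_lengths h p1 p2 p3 p4 x x x u u u ->
  of_type T 120 30 30.
Proof.
  intros Hh Hp Hn.
  assert (Hx : In x sides) by (apply (Permutation_in _ Hp); simpl; tauto).
  assert (Hu : In u sides) by (apply (Permutation_in _ Hp); simpl; tauto).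
  pose proof (in_sides_bounds x Hx); pose proof (in_sides_bounds u Hu).
  apply (of_type_120_30_30_of_sides T x u); [lra | lra | exact Hp |].
  assert (Hstar : star_poly x u = 0).
  { apply (admissible_obstruction h); [exact Hh | |].
    - right. apply in_app_iff. right.
      exact (in_map (fun xu => star_poly (fst xu) (snd xu)) _ (x, u) (in_prod _ _ _ _ Hx Hu)).
    - rewrite <- cayley_menger_star.
      apply (cayley_menger_near_sides h p1 p2 p3 p4); [exact Hh | | exact Hn].
      intros s Hs. apply (Permutation_in _ Hp). simpl in *; tauto. }
  assert (0 < (u ^ 2 / 2) ^ 2) by (apply pow_lt, Rdiv_lt_0_compat; [apply pow_lt |]; lra).
  unfold star_poly in Hstar. apply Rmult_integral in Hstar as [|]; lra.
Qed.

End NearCongruence.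

Theorem lemma2p9 (T : tri3) :
  is_triangle T ->
  ~ has_right_angle T ->
  ~ of_type T 120 30 30 ->
  K4minus_forbidden T.
Proof.
  intros HT Hright Htype.
  destruct (admissible_exists T HT) as [h Hh].
  exists (h / (2 * min_side T)). split.
  - pose proof (min_side_pos T HT). destruct Hh as [Hh0 _]. apply Rdiv_lt_0_compat; lra.
  - intros P _ _ (f & _ & _ & (_ & _ & _ & _ & _ & _ & E123) & (_ & _ & _ & _ & _ & _ & E124)
                              & (_ & _ & _ & _ & _ & _ & E134)).
    apply (eps_congruent_near_sides T HT) in E123, E124, E134.
    destruct (near_K4minus_cases T HT h _ _ _ _ Hh E123 E124 E134)
      as [(a & b & c & Hp & Hn) | (x & u & Hp & Hn)].
    + exact (Hright (isosceles_pattern_right_angle T HT h _ _ _ _ a b c Hh Hp Hn)).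
    + exact (Htype (star_pattern_of_type T HT h _ _ _ _ x u Hh Hp Hn)).
Qed.
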